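(* In the setting described in the context, let $n\ge3$ and let $M=\{(0,\dots,0,u):u\in\mathsf k\}\subseteq U$. Assume that for every $\upsilon=(0,\dots,0,u)\in M$ with $u\ne0$, the centralizer of $\upsilon U_{n-3}$ in $U_{n-1}/U_{n-3}$ equals $U_{n-2}/U_{n-3}$. Then (up to a constant factor $c\in\mathsf k^*$ in the added term, which can be normalized to $1$ by rescaling a coordinate) the automorphism of $U_{n-1}/U_{n-3}$ induced by conjugation by $\upsilon=(0,\dots,0,u)$ maps $(\dots,x_{n-2},x_{n-1},0)U_{n-3}\mapsto(\dots,x_{n-2}+u^hx_{n-1}^k,x_{n-1},0)U_{n-3}$, where $h,k$ are powers of $p$ if $\mathrm{char}\,\mathsf k=p>0$, and $h=k=1$ otherwise.
   Context: Let $\mathsf k$ be an algebraically closed field and $G=U\rtimes T$ the semidirect product of an $n$-dimensional connected unipotent algebraic group $U$ by a $1$-dimensional connected torus $T$. Assume $U$ is identified with the affine space $\mathsf k^n$ so that: the subsets $U_i=\{(x_1,\dots,x_n): x_{i+1}=\dots=x_n=0\}$ ($0\le i\le n$) are normal subgroups of $G$; the product is $(x_1,\dots,x_n)(y_1,\dots,y_n)=(x_1+y_1+\psi_1,\ \dots,\ x_{n-1}+y_{n-1}+\psi_{n-1},\ x_n+y_n)$ where $\psi_j\in\mathsf k[x_{j+1},\dots,x_n,y_{j+1},\dots,y_n]$; and each $\tau\in T$ acts on $U$ by the automorphism $(x_1,\dots,x_n)\mapsto(a_\tau^{e_1}x_1+\varphi_1^{(\tau)}(x_2,\dots,x_n),\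 \dots,\ a_\tau^{e_{n-1}}x_{n-1}+\varphi^{(\tau)}_{n-1}(x_n),\ a_\tau^{e_n}x_n)$, where $a_\tau\in\mathsf k^*$ depends bi-regularly on $\tau$, each $\varphi^{(\tau)}_j$ is a morphism, and the $e_j$ are fixed integers. *)

From HB Require Import structures.
From mathcomp Require Import all_boot all_order all_algebra all_field.
Set Implicit Arguments. Unset Strict Implicit. Unset Printing Implicit Defensive.
Import Order.TTheory GRing.Theory Num.Theory.
Local Open Scope ring_scope.

(* Points of U = k^n are row vectors 'rV[F]_n; the paper's coordinate x_i
   (1 <= i <= n) is  x 0 (i-1). *)

Definition polyfun (F : fieldType) (I : finType) (S : pred I)
  (f : (I -> F) -> F) : Prop :=
  exists s : seq (F * {ffun I -> nat}),
    (forall t, t \in s -> forall i, ~~ S i -> t.2 i = 0%N) /\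
    forall v, f v = \sum_(t <- s) t.1 * \prod_(i : I) v i ^+ t.2 i.

(* 1-based coordinate x_i of a point (0 if out of range) *)
Definition coord (F : fieldType) (n : nat) (x : 'rV[F]_n) (i : nat) : F :=
  if (0 < i)%N then
    (if @insub nat (fun k => k < n)%N 'I_n i.-1 is Some j then x 0 j else 0)
  else 0.

(* membership in U_i = { x | x_{i+1} = ... = x_n = 0 } *)
Definition inU (F : fieldType) (n : nat) (i : nat) (x : 'rV[F]_n) : Prop :=
  forall j : 'I_n, (i <= j)%N -> x 0 j = 0.

Definition pt (F : fieldType) (n : nat) (x y : 'rV[F]_n) : 'I_n + 'I_n -> F :=
  fun i => match i with inl k => x 0 k | inr k => y 0 k end.

(* variables x_{j+1..n}, y_{j+1..n} (0-based index strictly above j) *)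
Definition above2 (n : nat) (j : 'I_n) : pred ('I_n + 'I_n) :=
  fun i => match i with inl k => (j < k)%N | inr k => (j < k)%N end.

Definition unipotent_law (F : fieldType) (n : nat)
  (mul : 'rV[F]_n -> 'rV[F]_n -> 'rV[F]_n) : Prop :=
  exists psi : 'I_n -> ('I_n + 'I_n -> F) -> F,
    (forall j, polyfun (above2 j) (psi j)) /\
    (forall j : 'I_n, j.+1 = n -> forall v, psi j v = 0) /\
    forall x y j, mul x y 0 j = x 0 j + y 0 j + psi j (pt x y).

Definition group_axioms (F : fieldType) (n : nat)
  (mul : 'rV[F]_n -> 'rV[F]_n -> 'rV[F]_n) (inv : 'rV[F]_n -> 'rV[F]_n) : Prop :=
  (forall x y z, mul x (mul y z) = mul (mul x y) z) /\
  (forall x, mul 0 x = x) /\ (forall x, mul x 0 = x) /\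
  (forall x, mul x (inv x) = 0) /\ (forall x, mul (inv x) x = 0).

Definition conj (F : fieldType) (n : nat)
  (mul : 'rV[F]_n -> 'rV[F]_n -> 'rV[F]_n) (inv : 'rV[F]_n -> 'rV[F]_n)
  (g x : 'rV[F]_n) : 'rV[F]_n := mul (mul g x) (inv g).

(* The torus T (a 1-dimensional connected torus, identified with k^* ) acts
   on U: act tau for tau <> 0. *)
Definition torus_action (F : fieldType) (n : nat)
  (mul : 'rV[F]_n -> 'rV[F]_n -> 'rV[F]_n)
  (act : F -> 'rV[F]_n -> 'rV[F]_n) : Prop :=
  (forall x, act 1 x = x) /\
  (forall t s x, t != 0 -> s != 0 -> act (t * s) x = act t (act s x)) /\
  (forall t x y, t != 0 -> act t (mul x y) = mul (act t x) (act t y)).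

Definition biregular_units (F : fieldType) (a : F -> F) : Prop :=
  (forall t, t != 0 -> a t != 0) /\
  exists (b : F -> F) (P Q : {poly F}) (m1 m2 : nat),
    (forall t, t != 0 -> b t != 0) /\
    (forall t, t != 0 -> a t = P.[t] / t ^+ m1) /\
    (forall t, t != 0 -> b t = Q.[t] / t ^+ m2) /\
    (forall t, t != 0 -> b (a t) = t) /\
    (forall t, t != 0 -> a (b t) = t).

Definition torus_form (F : fieldType) (n : nat)
  (act : F -> 'rV[F]_n -> 'rV[F]_n) (a : F -> F) (e : 'I_n -> int) : Prop :=
  exists phi : F -> 'I_n -> ('I_n -> F) -> F,
    (forall t (j : 'I_n), t != 0 -> polyfun (fun k : 'I_n => (j < k)%N) (phi t j)) /\
    (forall t (j : 'I_n), j.+1 = n -> forall v, phi t j v = 0) /\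
    forall t x j, t != 0 ->
      act t x 0 j = a t ^ e j * x 0 j + phi t j (fun k => x 0 k).

(* the U_i are normal subgroups of G = U x| T *)
Definition normal_series (F : fieldType) (n : nat)
  (mul : 'rV[F]_n -> 'rV[F]_n -> 'rV[F]_n) (inv : 'rV[F]_n -> 'rV[F]_n)
  (act : F -> 'rV[F]_n -> 'rV[F]_n) : Prop :=
  forall i, (i <= n)%N ->
    (forall x y, inU i x -> inU i y -> inU i (mul x y)) /\
    (forall x, inU i x -> inU i (inv x)) /\
    (forall g x, inU i x -> inU i (conj mul inv g x)) /\
    (forall t x, t != 0 -> inU i x -> inU i (act t x)).

Definition same_coset (F : fieldType) (n : nat)
  (mul : 'rV[F]_n -> 'rV[F]_n -> 'rV[F]_n) (i : nat) (a b : 'rV[F]_n) : Prop :=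
  exists z, inU i z /\ b = mul a z.

Definition upsilon (F : fieldType) (n : nat) (u : F) : 'rV[F]_n :=
  \row_(j < n) (if j.+1 == n then u else 0).

Definition target (F : fieldType) (n : nat) (c u : F) (h k : nat)
  (x : 'rV[F]_n) : 'rV[F]_n :=
  \row_(j < n) (if j.+3 == n
                then x 0 j + c * u ^+ h * coord x n.-1 ^+ k
                else x 0 j).

From Pilot Require Import Defs.
From HB Require Import structures.
From mathcomp Require Import all_boot all_order all_algebra all_field zify.
From Stdlib Require Import Classical.
Import Order.TTheory GRing.Theory Num.Theory.
Local Open Scope ring_scope.

Set Implicit Arguments. Unset Strict Implicit. Unset Printing Implicit Defensive.

(* Write n = m + 3 and call jA, jB, jC the last three coordinates x_{n-2},
   x_{n-1}, x_n.  Modulo U_{n-3} only these matter, and by triangularity of the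
   law x_n is additive, x_{n-1} is corrected by a polynomial pB in the x_n's,
   and x_{n-2} by a polynomial pA in the x_{n-1}'s and x_n's.  Hence
   conjugation by upsilon(u) fixes x_{n-1}, x_n of a point of U_{n-1} and
   shifts x_{n-2} by D(u, x_{n-1}), a polynomial function of two variables.
   - D has no zeros on (k^* )^2, by the centralizer hypothesis;
   - over an algebraically closed field such a D is a monomial c u^h v^k;
   - conjugation is a homomorphism, so D is additive in v, and comparing the
     conjugations by upsilon(u), upsilon(w), upsilon(u+w) gives additivity in
     u at a suitable v != 0; so x^h and x^k are additive power maps;
   - an additive power map x^q has q a power of the characteristic p, and
     q = 1 in characteristic 0.
   The file develops these facts in this order: additive power maps and
   monomials over closed fields, polynomial functions of two variables,
   conjugation in a group, the coordinate calculus near the top of U, and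
   finally the theorem. *)

Definition additive_power (R : pzRingType) (q : nat) : Prop :=
  forall v w : R, (v + w) ^+ q = v ^+ q + w ^+ q.

Section ClosedFields.
Variable F : closedFieldType.

(* A nonzero polynomial does not vanish at some nonzero point: a root of
   X * p - 1 is such a point. *)
Lemma exists_nonroot (p : {poly F}) : p != 0 -> exists2 u, u != 0 & p.[u] != 0.
Proof.
move=> p_nz.
have size_Xp : size ('X * p - 1) = (size p).+1.
  rewrite size_polyDl mulrC size_mulX // size_polyN size_poly1 ltnS lt0n.
  by rewrite size_poly_eq0.
have /closed_rootP [u] : size ('X * p - 1) != 1.
  by rewrite size_Xp eqSS size_poly_eq0.
rewrite rootE !hornerE subr_eq0 => /eqP up1.
by exists u; apply: contra_eq_neq up1 => ->; rewrite ?mul0r ?mulr0 eq_sym oner_eq0.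
Qed.

(* A polynomial without zeros on F^* is a monomial: its only possible root
   is 0, so it is (X - 0)^q times a root-free, hence constant, factor. *)
Lemma nonvanishing_monomial (p : {poly F}) :
  (forall v, v != 0 -> p.[v] != 0) -> exists c q, c != 0 /\ p = c *: 'X^q.
Proof.
move=> p_nz.
have nz_p : p != 0.
  by apply: contra_neq (p_nz 1 (oner_neq0 _)) => ->; rewrite horner0.
have [q [r r0 Dp]] := multiplicity_XsubC p 0.
rewrite nz_p subr0 /= in r0 Dp.
have /size_poly1P [c c0 Dr] : size r == 1.
  apply/negPn/negP => /closed_rootP [v rv].
  have v0 : v != 0 by apply: contraNneq r0 => <-.
  by move: (p_nz v v0); rewrite Dp hornerM (rootP rv) mul0r eqxx.
by exists c, q; rewrite Dp Dr mul_polyC.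
Qed.

Lemma additive_power_gt0 q : additive_power F q -> (0 < q)%N.
Proof.
case: q => // /(_ 1 1) /eqP; rewrite !expr0 -{1}[1]addr0 (inj_eq (addrI 1)).
by rewrite eq_sym oner_eq0.
Qed.

(* If q > 1 then q = 0 in F: the polynomial (X + 1)^q - X^q - 1 has no
   nonzero value, hence is 0, while its derivative at 0 is q. *)
Lemma additive_power_natr q : additive_power F q -> (1 < q)%N -> q%:R = 0 :> F.
Proof.
move=> addq; case: q addq => [|[|q]] // addq _.
pose p : {poly F} := ('X + 1) ^+ q.+2 - ('X ^+ q.+2 + 1).
have p_eq0 : p = 0.
  apply/eqP/negPn/negP => /exists_nonroot [v _].
  by rewrite /p !hornerE addq expr1n subrr eqxx.
have := congr1 (fun r => r^`().[0]) p_eq0.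
rewrite /p derivB derivD deriv_exp derivD derivX derivC addr0 mul1r derivXn.
rewrite deriv0 addr0 horner0 hornerD hornerN !hornerMn horner_exp hornerXn.
by rewrite hornerD hornerX hornerC add0r expr1n expr0n mul0rn subr0.
Qed.

(* In characteristic p an additive power map is a power of p: write
   q = p^e * r with r coprime to p; as every element is a p^e-th power,
   x |-> x^r is additive too, and r > 1 would give p | r. *)
Lemma additive_power_pchar q p :
  additive_power F q -> p \in [pchar F] -> exists i, q = (p ^ i)%N.
Proof.
move=> addq pc; have p_pr := pcharf_prime pc.
have [r cop_rp Dq] := pfactor_coprime p_pr (additive_power_gt0 addq).
set e := logn p q in Dq; exists e.
have pe_root (c : F) : exists c', c' ^+ (p ^ e) = c.
  have : size ('X^(p ^ e) - c%:P) != 1.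
    by rewrite size_XnsubC ?expn_gt0 ?prime_gt0 // eqSS -lt0n expn_gt0 prime_gt0.
  by case/closed_rootP => x; rewrite rootE !hornerE subr_eq0 => /eqP; exists x.
have addr : additive_power F r.
  move=> v w; have [v' <-] := pe_root v; have [w' <-] := pe_root w.
  have pe_nat : [pchar F].-nat (p ^ e)%N.
    by rewrite (eq_pnat _ (pcharf_eq pc)) pnatX (pnat_id p_pr).
  by rewrite -exprDn_pchar // -!exprM !(mulnC _ r) -Dq.
suff r1 : r = 1%N by rewrite Dq r1 mul1n.
apply/eqP; rewrite eqn_leq (additive_power_gt0 addr) andbT leqNgt.
apply/negP => /(additive_power_natr addr)/eqP; rewrite -(dvdn_pcharf pc).
by move=> p_dvd_r; rewrite prime_coprime // p_dvd_r in cop_rp.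
Qed.

Lemma additive_power_char0 q :
  additive_power F q -> (forall p, p \notin [pchar F]) -> q = 1%N.
Proof.
move=> addq char0; have q_gt0 := additive_power_gt0 addq.
apply/eqP; rewrite eqn_leq q_gt0 andbT leqNgt; apply/negP => q_gt1.
have [p pc] := natf0_pchar q_gt0 (introT eqP (additive_power_natr addq q_gt1)).
by move: (char0 p); rewrite pc.
Qed.

Lemma additive_power_exponents h k : additive_power F h -> additive_power F k ->
  (exists p, p \in [pchar F] /\ exists i j, h = (p ^ i)%N /\ k = (p ^ j)%N) \/
  ((forall p, p \notin [pchar F]) /\ h = 1%N /\ k = 1%N).
Proof.
move=> addh addk; have [[p pc]|no_char] := classic (exists p, p \in [pchar F]).
  have [i ->] := additive_power_pchar addh pc.
  have [j ->] := additive_power_pchar addk pc.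
  by left; exists p; split=> //; exists i, j.
have char0 p : p \notin [pchar F] by apply/negP => pc; apply: no_char; exists p.
by right; rewrite (additive_power_char0 addh char0) (additive_power_char0 addk char0).
Qed.

End ClosedFields.

Section TwoVariablePolynomialFunctions.
Variable F : fieldType.

(* Evaluation of P : {poly {poly F}} at (u, v): the inner variable is set to
   u and the outer one to v.  It is a ring morphism. *)
Definition ev2 (u v : F) : {rmorphism {poly {poly F}} -> F} :=
  horner_eval v \o map_poly (horner_eval u).

Lemma ev2_polyC u v (q : {poly F}) : ev2 u v q%:P = q.[u].
Proof. by rewrite /= map_polyC /= !horner_evalE hornerC. Qed.

Lemma ev2_X u v : ev2 u v 'X = v.
Proof. by rewrite /= map_polyX horner_evalE hornerX. Qed.

Definition poly2 (f : F -> F -> F) : Prop :=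
  exists P : {poly {poly F}}, forall u v, f u v = ev2 u v P.

Lemma poly2_const c : poly2 (fun _ _ => c).
Proof. by exists c%:P%:P => u v; rewrite ev2_polyC hornerC. Qed.

Lemma poly2_fst : poly2 (fun u _ => u).
Proof. by exists 'X%:P => u v; rewrite ev2_polyC hornerX. Qed.

Lemma poly2_snd : poly2 (fun _ v => v).
Proof. by exists 'X => u v; rewrite ev2_X. Qed.

Lemma poly2_opp f : poly2 f -> poly2 (fun u v => - f u v).
Proof. by move=> [P DP]; exists (- P) => u v; rewrite rmorphN DP. Qed.

Lemma poly2_add f g : poly2 f -> poly2 g -> poly2 (fun u v => f u v + g u v).
Proof. by move=> [P DP] [Q DQ]; exists (P + Q) => u v; rewrite rmorphD DP DQ. Qed.

Lemma poly2_polyfun (I : finType) (S : pred I) (f : (I -> F) -> F)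
    (V : F -> F -> I -> F) :
  polyfun S f -> (forall i, poly2 (fun u v => V u v i)) ->
  poly2 (fun u v => f (V u v)).
Proof.
move=> [s [_ Df]] /fin_all_exists [P DP].
exists (\sum_(t <- s) t.1%:P%:P * \prod_i P i ^+ t.2 i) => u v.
rewrite Df rmorph_sum; apply: eq_bigr => t _.
rewrite rmorphM rmorph_prod ev2_polyC hornerC; congr (_ * _).
by apply: eq_bigr => i _; rewrite rmorphXn DP.
Qed.

End TwoVariablePolynomialFunctions.

(* For fixed u != 0 it is a monomial in v, so the
   coefficients P_j (polynomials in u) of distinct powers of v never both
   survive at a common u; by the nonroot lemma at most one P_k is nonzero,
   and P_k is itself nonvanishing on F^*. *)
Lemma poly2_monomial (F : closedFieldType) (f : F -> F -> F) : poly2 f ->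
  (forall u v, u != 0 -> v != 0 -> f u v != 0) ->
  exists c h k, c != 0 /\ forall u v, f u v = c * u ^+ h * v ^+ k.
Proof.
move=> [P fP] f_nz.
pose Pu u := map_poly (horner_eval u) P.
have Pu_coef u j : (Pu u)`_j = (P`_j).[u] by rewrite coef_map.
have Pu_mono u : u != 0 -> exists c q, c != 0 /\ Pu u = c *: 'X^q.
  by move=> u0; apply: nonvanishing_monomial => v v0; rewrite -[_.[v]]fP f_nz.
have coef_uniq i j : P`_i != 0 -> P`_j != 0 -> i = j.
  move=> Pi Pj; have [u u0] := exists_nonroot (mulf_neq0 Pi Pj).
  rewrite hornerM -!Pu_coef; have [c [q [_ ->]]] := Pu_mono u u0.
  rewrite !coefZ !coefXn.
  by case: (eqVneq i q) => [->|_]; case: (eqVneq j q) => [->|_]; rewrite ?mulr0 ?mul0r ?eqxx.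
have P_nz : P != 0.
  by apply: contraNneq (f_nz 1 1 (oner_neq0 _) (oner_neq0 _)) => P0; rewrite fP P0 rmorph0.
set k := (size P).-1; have Pk_nz : P`_k != 0 by rewrite -lead_coefE lead_coef_eq0.
have DP : P = (P`_k)%:P * 'X^k.
  apply/polyP => j; rewrite coefCM coefXn; case: eqVneq => [->|jk]; first by rewrite mulr1.
  by rewrite mulr0; apply: contraNeq jk => /coef_uniq/(_ Pk_nz) ->.
have ev2P u v : f u v = (P`_k).[u] * v ^+ k by rewrite fP {1}DP rmorphM rmorphXn ev2_polyC ev2_X.
have [c [h [c0 DPk]]] : exists c h, c != 0 /\ P`_k = c *: 'X^h.
  by apply: nonvanishing_monomial => u u0; have := f_nz u 1 u0 (oner_neq0 _); rewrite ev2P expr1n mulr1.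
by exists c, h, k; split=> // u v; rewrite ev2P DPk hornerZ hornerXn.
Qed.

Lemma monomial_additive_exponents (F : idomainType) (f : F -> F -> F) c h k :
  c != 0 -> (forall u v, f u v = c * u ^+ h * v ^+ k) ->
  (forall u v w, f u (v + w) = f u v + f u w) ->
  (forall u w, exists2 s, s != 0 & f (u + w) s = f u s + f w s) ->
  additive_power F h /\ additive_power F k.
Proof.
move=> c0 Df add_snd add_fst; split=> [u w|v w].
  have [s s0] := add_fst u w; rewrite !Df -mulrDl => /(mulIf (expf_neq0 k s0)).
  by rewrite -mulrDr => /(mulfI c0).
by have := add_snd 1 v w; rewrite !Df !expr1n !mulr1 -mulrDr => /(mulfI c0).
Qed.

Lemma polyfun_dep (F : fieldType) (I : finType) (S : pred I) f (v w : I -> F) :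
  polyfun S f -> (forall i, S i -> v i = w i) -> f v = f w.
Proof.
move=> [s [s_S Df]] vw; rewrite !Df; apply: eq_big_seq => t t_s; congr (_ * _).
apply: eq_bigr => i _; have [/vw -> //|Si] := boolP (S i).
by rewrite (s_S t t_s i Si) !expr0.
Qed.

Lemma row0E (F : fieldType) n (j : 'I_n) : (0 : 'rV[F]_n) 0 j = 0.
Proof. by rewrite [LHS]mxE. Qed.

Section Conjugation.
Variables (F : fieldType) (n : nat).
Variables (mul : 'rV[F]_n -> 'rV[F]_n -> 'rV[F]_n) (inv : 'rV[F]_n -> 'rV[F]_n).
Hypothesis grp : group_axioms mul inv.
Local Notation cj := (conj mul inv).

Let mulA : forall x y z, mul x (mul y z) = mul (mul x y) z := proj1 grp.
Let mul0x : forall x, mul 0 x = x := proj1 (proj2 grp).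
Let mulx0 : forall x, mul x 0 = x := proj1 (proj2 (proj2 grp)).
Let mulxV : forall x, mul x (inv x) = 0 := proj1 (proj2 (proj2 (proj2 grp))).
Let mulVx : forall x, mul (inv x) x = 0 := proj2 (proj2 (proj2 (proj2 grp))).

Lemma mul_conj g x : mul (cj g x) g = mul g x.
Proof. by rewrite /conj -mulA mulVx mulx0. Qed.

Lemma conj_conj a b x : cj a (cj b x) = cj (mul a b) x.
Proof.
have inv_ab : inv (mul a b) = mul (inv b) (inv a).
  rewrite -[RHS]mul0x -(mulVx (mul a b)) -!mulA [mul b _]mulA mulxV mul0x.
  by rewrite mulxV mulx0.
by rewrite /conj inv_ab !mulA.
Qed.

Lemma conj_mul g x y : cj g (mul x y) = mul (cj g x) (cj g y).
Proof. by rewrite /conj !mulA -[mul (mul (mul _ _) _) g]mulA mulVx mulx0. Qed.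

Lemma conj_conj_defect a b c x :
  let z := mul (mul a b) (inv c) in mul (cj a (cj b x)) z = mul z (cj c x).
Proof.
move=> z; have zc : mul z c = mul a b by rewrite /z -mulA mulVx mulx0.
by rewrite conj_conj -zc -conj_conj mul_conj.
Qed.

End Conjugation.

Section TopCoordinates.
Variables (F : fieldType) (m : nat).
Local Notation n := m.+3.
Variables (mul : 'rV[F]_n -> 'rV[F]_n -> 'rV[F]_n) (inv : 'rV[F]_n -> 'rV[F]_n).
Variable psi : 'I_n -> ('I_n + 'I_n -> F) -> F.
Hypothesis psi_poly : forall j, polyfun (above2 j) (psi j).
Hypothesis psi_last : forall j : 'I_n, j.+1 = n -> forall v, psi j v = 0.
Hypothesis mulE : forall x y j, mul x y 0 j = x 0 j + y 0 j + psi j (pt x y).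
Hypothesis grp : group_axioms mul inv.

Let mulA : forall x y z, mul x (mul y z) = mul (mul x y) z := proj1 grp.
Let mul0x : forall x, mul 0 x = x := proj1 (proj2 grp).
Let mulx0 : forall x, mul x 0 = x := proj1 (proj2 (proj2 grp)).
Let mulxV : forall x, mul x (inv x) = 0 := proj1 (proj2 (proj2 (proj2 grp))).
Let mulVx : forall x, mul (inv x) x = 0 := proj2 (proj2 (proj2 (proj2 grp))).

(* The last three coordinates x_{n-2}, x_{n-1}, x_n (0-based m, m+1, m+2). *)
Definition jA : 'I_n := Ordinal (leqW (leqW (leqnn m.+1))).
Definition jB : 'I_n := Ordinal (leqnSn m.+2).
Definition jC : 'I_n := ord_max.

Lemma jA_B : (jA == jB) = false. Proof. by rewrite -val_eqE /= ltn_eqF. Qed.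
Lemma jA_C : (jA == jC) = false. Proof. by rewrite -val_eqE /= ltn_eqF. Qed.
Lemma jC_B : (jC == jB) = false. Proof. by rewrite -val_eqE /= gtn_eqF. Qed.

Lemma top_index (k : 'I_n) : (m <= k)%N -> [\/ k = jA, k = jB | k = jC].
Proof.
move=> le_mk; have lt_kn := ltn_ord k.
have [Dk|[Dk|Dk]] : k = m :> nat \/ k = m.+1 :> nat \/ k = m.+2 :> nat by lia.
- by constructor 1; apply: val_inj.
- by constructor 2; apply: val_inj.
- by constructor 3; apply: val_inj.
Qed.

Lemma above_jA (k : 'I_n) : (m < k)%N -> k = jB \/ k = jC.
Proof.
move=> lt_mk; case: (top_index (ltnW lt_mk)) => Dk; [|by left|by right].
by move: lt_mk; rewrite Dk ltnn.
Qed.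

Lemma above_jB (k : 'I_n) : (m.+1 < k)%N -> k = jC.
Proof.
move=> lt_k; case: (above_jA (ltnW lt_k)) => // Dk.
by move: lt_k; rewrite Dk ltnn.
Qed.

Definition vBC (b c : F) : 'rV[F]_n :=
  \row_j (if j == jB then b else if j == jC then c else 0).

Lemma vBC_A b c : vBC b c 0 jA = 0. Proof. by rewrite mxE jA_B jA_C. Qed.
Lemma vBC_B b c : vBC b c 0 jB = b. Proof. by rewrite mxE eqxx. Qed.
Lemma vBC_C b c : vBC b c 0 jC = c. Proof. by rewrite mxE jC_B eqxx. Qed.

(* By triangularity, the corrections of the x_{n-2} and x_{n-1} coordinates
   of a product depend only on the higher coordinates of the factors. *)
Definition pA (b1 c1 b2 c2 : F) : F := psi jA (pt (vBC b1 c1) (vBC b2 c2)).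
Definition pB (c1 c2 : F) : F := psi jB (pt (vBC 0 c1) (vBC 0 c2)).

Lemma mul_A x y :
  mul x y 0 jA = x 0 jA + y 0 jA + pA (x 0 jB) (x 0 jC) (y 0 jB) (y 0 jC).
Proof.
rewrite mulE; congr (_ + _); apply: polyfun_dep (psi_poly jA) _.
by case=> k /above_jA [->|->]; rewrite /= ?vBC_B ?vBC_C.
Qed.

Lemma mul_B x y : mul x y 0 jB = x 0 jB + y 0 jB + pB (x 0 jC) (y 0 jC).
Proof.
rewrite mulE; congr (_ + _); apply: polyfun_dep (psi_poly jB) _.
by case=> k /above_jB ->; rewrite /= vBC_C.
Qed.

Lemma mul_C x y : mul x y 0 jC = x 0 jC + y 0 jC.
Proof. by rewrite mulE psi_last // addr0. Qed.

(* Since 0 is the identity, the corrections vanish when a factor is 0. *)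
Lemma pB_c0 c : pB c 0 = 0.
Proof.
have /(congr1 (fun x : 'rV[F]_n => x 0 jB)) := mulx0 (vBC 0 c).
by rewrite mul_B vBC_B vBC_C !row0E !add0r.
Qed.

Lemma pA_bc00 b c : pA b c 0 0 = 0.
Proof.
have /(congr1 (fun x : 'rV[F]_n => x 0 jA)) := mulx0 (vBC b c).
by rewrite mul_A vBC_A vBC_B vBC_C !row0E !add0r.
Qed.

Lemma pA_00bc b c : pA 0 0 b c = 0.
Proof.
have /(congr1 (fun x : 'rV[F]_n => x 0 jA)) := mul0x (vBC b c).
by rewrite mul_A vBC_A vBC_B vBC_C !row0E !add0r.
Qed.

(* Points with the same last three coordinates lie in the same U_{n-3}-coset:
   the coordinates of a^-1 b at jA, jB, jC are those of a^-1 a = 0. *)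
Lemma same_coset_top (a b : 'rV[F]_n) :
  [/\ a 0 jA = b 0 jA, a 0 jB = b 0 jB & a 0 jC = b 0 jC] -> same_coset mul m a b.
Proof.
case=> eA eB eC; exists (mul (inv a) b); split; last by rewrite mulA mulxV mul0x.
move=> j /top_index [->|->|->].
- by rewrite mul_A -eA -eB -eC -mul_A mulVx row0E.
- by rewrite mul_B -eB -eC -mul_B mulVx row0E.
- by rewrite mul_C -eC -mul_C mulVx row0E.
Qed.

Local Notation ups u := (@upsilon F n u).

Lemma ups_A u : ups u 0 jA = 0. Proof. by rewrite mxE eqSS ltn_eqF. Qed.
Lemma ups_B u : ups u 0 jB = 0. Proof. by rewrite mxE eqSS ltn_eqF. Qed.
Lemma ups_C u : ups u 0 jC = u. Proof. by rewrite mxE eqxx. Qed.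

(* The x_{n-1} coordinate of upsilon(u)^-1. *)
Definition iB (u : F) : F := - pB u (- u).

Lemma inv_ups_C u : inv (ups u) 0 jC = - u.
Proof.
have /(congr1 (fun x : 'rV[F]_n => x 0 jC)) := mulxV (ups u).
by rewrite mul_C ups_C row0E addrC => /eqP; rewrite addr_eq0 => /eqP.
Qed.

Lemma inv_ups_B u : inv (ups u) 0 jB = iB u.
Proof.
have /(congr1 (fun x : 'rV[F]_n => x 0 jB)) := mulxV (ups u).
by rewrite mul_B ups_B ups_C inv_ups_C row0E add0r => /eqP; rewrite addr_eq0 => /eqP.
Qed.

Lemma inv_ups_A u : inv (ups u) 0 jA = - pA 0 u (iB u) (- u).
Proof.
have /(congr1 (fun x : 'rV[F]_n => x 0 jA)) := mulxV (ups u).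
rewrite mul_A ups_A ups_B ups_C inv_ups_B inv_ups_C row0E add0r.
by move=> /eqP; rewrite addr_eq0 => /eqP.
Qed.

(* The shift of the x_{n-2} coordinate under conjugation by upsilon(u) of a
   point with x_{n-1} = v and x_n = 0. *)
Definition D (u v : F) : F :=
  pA 0 u v 0 - pA 0 u (iB u) (- u) + pA v u (iB u) (- u).

Local Notation cj u := (conj mul inv (ups u)).

Lemma conj_ups_C u (y : 'rV[F]_n) : y 0 jC = 0 -> cj u y 0 jC = 0.
Proof. by move=> yC; rewrite !mul_C ups_C yC addr0 inv_ups_C subrr. Qed.

Lemma conj_ups_B u (y : 'rV[F]_n) : y 0 jC = 0 -> cj u y 0 jB = y 0 jB.
Proof.
move=> yC; rewrite !mul_B mul_C ups_B ups_C yC addr0 pB_c0 add0r addr0.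
by rewrite inv_ups_B inv_ups_C /iB subrK.
Qed.

Lemma conj_ups_A u (y : 'rV[F]_n) : y 0 jC = 0 -> cj u y 0 jA = y 0 jA + D u (y 0 jB).
Proof.
move=> yC; rewrite !mul_A mul_B mul_C ups_A ups_B ups_C yC addr0 pB_c0.
by rewrite inv_ups_A inv_ups_B inv_ups_C /D !add0r addr0 !addrA.
Qed.


Lemma poly2_vBC (b c : F -> F -> F) k : poly2 b -> poly2 c ->
  poly2 (fun u v => vBC (b u v) (c u v) 0 k).
Proof.
move=> [P DP] [Q DQ]; exists (if k == jB then P else if k == jC then Q else 0).
by move=> u v; rewrite mxE; do 2!case: ifP => _ //; rewrite rmorph0.
Qed.

Lemma poly2_pA (b1 c1 b2 c2 : F -> F -> F) :
  poly2 b1 -> poly2 c1 -> poly2 b2 -> poly2 c2 ->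
  poly2 (fun u v => pA (b1 u v) (c1 u v) (b2 u v) (c2 u v)).
Proof.
move=> pb1 pc1 pb2 pc2; apply: (poly2_polyfun (psi_poly jA)
  (V := fun u v => pt (vBC (b1 u v) (c1 u v)) (vBC (b2 u v) (c2 u v)))).
by case=> k; apply: poly2_vBC.
Qed.

Lemma poly2_pB (c1 c2 : F -> F -> F) :
  poly2 c1 -> poly2 c2 -> poly2 (fun u v => pB (c1 u v) (c2 u v)).
Proof.
move=> pc1 pc2; apply: (poly2_polyfun (psi_poly jB)
  (V := fun u v => pt (vBC 0 (c1 u v)) (vBC 0 (c2 u v)))).
by case=> k; apply: poly2_vBC => //; apply: poly2_const.
Qed.

Lemma poly2_D : poly2 D.
Proof.
have p0 := poly2_const (0 : F); have pu := @poly2_fst F; have pv := @poly2_snd F.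
have pnu := poly2_opp pu; have piB := poly2_opp (poly2_pB pu pnu).
exact: poly2_add (poly2_add (poly2_pA p0 pu pv p0)
  (poly2_opp (poly2_pA p0 pu piB pnu))) (poly2_pA pv pu piB pnu).
Qed.


Lemma commute_mod_top u (x : 'rV[F]_n) : x 0 jC = 0 -> D u (x 0 jB) = 0 ->
  same_coset mul m (mul x (ups u)) (mul (ups u) x).
Proof.
move=> xC D0; rewrite -[mul (ups u) x](mul_conj grp); apply: same_coset_top.
have eA : cj u x 0 jA = x 0 jA by rewrite conj_ups_A // D0 addr0.
have eB : cj u x 0 jB = x 0 jB := conj_ups_B u xC.
have eC : cj u x 0 jC = x 0 jC by rewrite conj_ups_C.
split; first by rewrite mul_A [RHS]mul_A eA eB eC.
  by rewrite mul_B [RHS]mul_B eB eC.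
by rewrite mul_C [RHS]mul_C eC.
Qed.

(* D has no zeros on (F^* )^2: otherwise vBC v 0, which is not in U_{n-2},
   would centralize upsilon(u) modulo U_{n-3}. *)
Lemma D_nonvanishing :
  (forall u, u != 0 -> forall x, inU m.+2 x ->
     same_coset mul m (mul x (ups u)) (mul (ups u) x) -> inU m.+1 x) ->
  forall u v, u != 0 -> v != 0 -> D u v != 0.
Proof.
move=> cent u v u0 v0; apply/eqP => D0; have xC := vBC_C v 0.
have x_top : inU m.+2 (vBC v 0) by move=> j /above_jB ->.
have D0' : D u (vBC v 0 0 jB) = 0 by rewrite vBC_B.
have := cent u u0 _ x_top (commute_mod_top xC D0') jB (leqnn _).
by rewrite vBC_B => /eqP; rewrite (negbTE v0).
Qed.

(* Conjugation is a homomorphism and only shifts x_{n-2} by D(u, x_{n-1}) on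
   points with x_n = 0; hence D(u, .) is additive. *)
Lemma D_additive_snd u v w : D u (v + w) = D u v + D u w.
Proof.
set x := vBC v 0; set y := vBC w 0.
have xC : x 0 jC = 0 := vBC_C v 0; have yC : y 0 jC = 0 := vBC_C w 0.
have xyC : mul x y 0 jC = 0 by rewrite mul_C xC yC addr0.
have : cj u (mul x y) 0 jA = mul (cj u x) (cj u y) 0 jA by rewrite (conj_mul grp).
rewrite conj_ups_A // [in RHS]mul_A !conj_ups_A // !conj_ups_B // !conj_ups_C //.
rewrite [mul x y 0 jA]mul_A mul_B xC yC pB_c0 !vBC_A !vBC_B !add0r addr0.
by move=> E; apply: (addIr (pA v 0 w 0)); rewrite addrC E addrAC.
Qed.

(* Additivity of D in u, tested at a well-chosen s != 0: the defect
   z = upsilon(u) upsilon(w) upsilon(u+w)^-1 has z_n = 0, and comparing the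
   x_{n-2} coordinates in the defect identity for x = vBC s 0 leaves only the
   correction terms pA(s,0,z_{n-1},0) and pA(z_{n-1},0,s,0), which agree for
   s = z_{n-1} (or s = 1 if z_{n-1} = 0, when both vanish). *)
Lemma D_additive_fst u w : exists2 s, s != 0 & D (u + w) s = D u s + D w s.
Proof.
set z := mul (mul (ups u) (ups w)) (inv (ups (u + w))).
have zC : z 0 jC = 0 by rewrite !mul_C !ups_C inv_ups_C subrr.
pose s := if z 0 jB == 0 then 1 else z 0 jB.
have s0 : s != 0 by rewrite /s; case: ifPn => // _; rewrite oner_eq0.
have pA_sym : pA s 0 (z 0 jB) 0 = pA (z 0 jB) 0 s 0.
  by rewrite /s; case: eqVneq => [->|_] //; rewrite pA_bc00 pA_00bc.
exists s => //; set x := vBC s 0; have xC : x 0 jC = 0 := vBC_C s 0.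
have cwC : cj w x 0 jC = 0 := conj_ups_C w xC.
have : mul (cj u (cj w x)) z 0 jA = mul z (cj (u + w) x) 0 jA.
  by rewrite (conj_conj_defect grp).
rewrite mul_A [RHS]mul_A conj_ups_A // conj_ups_B // conj_ups_C // conj_ups_A //.
rewrite conj_ups_B // conj_ups_A // conj_ups_B // conj_ups_C // zC vBC_A vBC_B.
rewrite conj_ups_B // vBC_B -pA_sym !add0r [z 0 jA + _]addrC => /addIr/addIr <-.
by rewrite addrC.
Qed.

Lemma coord_B (x : 'rV[F]_n) : Defs.coord x m.+2 = x 0 jB.
Proof.
rewrite /Defs.coord /= (insubT (fun k => (k < n)%N) (leqnSn m.+2)) /=.
by congr (x 0 _); apply: val_inj.
Qed.

Lemma conj_ups_target c h k : (forall u v, D u v = c * u ^+ h * v ^+ k) ->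
  forall u x, inU m.+2 x -> same_coset mul m (cj u x) (target c u h k x).
Proof.
move=> DE u x x_top; have xC : x 0 jC = 0 by apply: x_top.
apply: same_coset_top; rewrite !mxE /= eqxx !gtn_eqF //.
by rewrite conj_ups_A // conj_ups_B // conj_ups_C // coord_B DE.
Qed.

End TopCoordinates.

Theorem mainTheorem9 (F : closedFieldType) (n : nat)
  (mul : 'rV[F]_n -> 'rV[F]_n -> 'rV[F]_n) (inv : 'rV[F]_n -> 'rV[F]_n)
  (act : F -> 'rV[F]_n -> 'rV[F]_n) (a : F -> F) (e : 'I_n -> int) :
  (3 <= n)%N ->
  unipotent_law mul ->
  group_axioms mul inv ->
  torus_action mul act ->
  biregular_units a ->
  torus_form act a e ->
  normal_series mul inv act ->
  (* centralizer of upsilon U_{n-3} in U_{n-1}/U_{n-3} is U_{n-2}/U_{n-3} *)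
  (forall u : F, u != 0 -> forall x, inU n.-1 x ->
     (same_coset mul (n - 3) (mul x (upsilon n u)) (mul (upsilon n u) x)
      <-> inU (n - 2) x)) ->
  exists (c : F) (h k : nat),
    c != 0 /\
    ((exists p, p \in [pchar F] /\ exists i j, h = (p ^ i)%N /\ k = (p ^ j)%N)
     \/ ((forall p, p \notin [pchar F]) /\ h = 1%N /\ k = 1%N)) /\
    forall (u : F) x, inU n.-1 x ->
      same_coset mul (n - 3) (conj mul inv (upsilon n u) x) (target c u h k x).
Proof.
move=> n_ge3 [psi [psi_poly [psi_last mulE]]] grp _ _ _ _ cent.
have [m Dn] : exists m, n = m.+3 by exists (n - 3)%N; rewrite -addn3 subnK.
subst n.
rewrite !subSS !subn0 in cent *.
have D_nz : forall u v, u != 0 -> v != 0 -> D psi u v != 0.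
  apply: (D_nonvanishing psi_poly psi_last mulE grp) => u u0 x.
  by move=> /(cent u u0 x) [].
have [c [h [k [c0 DE]]]] := poly2_monomial (poly2_D psi_poly) D_nz.
have [add_h add_k] := monomial_additive_exponents c0 DE
  (D_additive_snd psi_poly psi_last mulE grp)
  (D_additive_fst psi_poly psi_last mulE grp).
exists c, h, k; split=> //; split; first exact: additive_power_exponents.
exact: (conj_ups_target psi_poly psi_last mulE grp DE).
Qed.
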